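(* Consider the two-valued atomic model under the proportional-to-square-roots scheme, with $n_b$ large players of stake $a$ and $n_s$ small players of stake $1$, and suppose $n_s\ge h^2+n_b\lceil h-\sqrt a+1\rceil$. Then the Price of Stability satisfies \[\mathrm{PoS}\le\frac{h+1}{h}\cdot\frac{n_b a+n_s}{n_b(\sqrt a-1)+n_s-h-1}.\]
   Context: Atomic model with threshold $h$: every player has stake $1$ (small) or $a$ (large), with $h,a$ integers, $2\le a\le h-1$. Each player opens her own pool or joins one; pools partition the players; a pool $C$ has reward $\rho(C)=1$ if its total stake is at least $h$ (winning), else $0$. Proportional-to-square-roots scheme: player $i$ with stake $a_i$ in pool $C$ receives $\frac{\sqrt{a_i}}{\sum_{j\in C}\sqrt{a_j}}\rho(C)$. A partition into winning pools is a Nash equilibrium if no player can strictly increase her payment by moving to another pool or opening a new pool alone. $OPT(G)$ is the maximum number of pools of stake at least $h$ in a partition of the players; $W(\Pi)$ is the number of winning pools of $\Pi$; the Price of Stability is $\min_\Pi OPT(G)/W(\Pi)$ over Nash equilibrium partitions. *)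

From mathcomp Require Import all_boot all_order all_algebra.
From mathcomp Require Import reals.
Set Implicit Arguments. Unset Strict Implicit. Unset Printing Implicit Defensive.
Import Order.TTheory GRing.Theory Num.Theory.
Local Open Scope ring_scope.

Definition stake (nb a : nat) {N : nat} (i : 'I_N) : nat :=
  if (i < nb)%N then a else 1%N.

Definition pstake (nb a : nat) {N : nat} (C : {set 'I_N}) : nat :=
  (\sum_(i in C) stake nb a i)%N.

Definition rho (R : realType) (h nb a : nat) {N : nat} (C : {set 'I_N}) : R :=
  if (h <= pstake nb a C)%N then 1 else 0.

Definition pay (R : realType) (h nb a : nat) {N : nat} (i : 'I_N) (C : {set 'I_N}) : R :=
  Num.sqrt ((stake nb a i)%:R : R) /
    (\sum_(j in C) Num.sqrt ((stake nb a j)%:R : R)) * rho R h nb a C.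

Definition is_NE (R : realType) (h nb a : nat) {N : nat} (P : {set {set 'I_N}}) : Prop :=
  forall i : 'I_N,
    (forall C, C \in P -> C != pblock P i ->
       pay R h nb a i (i |: C) <= pay R h nb a i (pblock P i)) /\
    pay R h nb a i [set i] <= pay R h nb a i (pblock P i).

Definition W (h nb a : nat) {N : nat} (P : {set {set 'I_N}}) : nat :=
  #|[set C in P | (h <= pstake nb a C)%N]|.

Definition OPT (h nb a N : nat) : nat :=
  (\max_(P : {set {set 'I_N}} | partition P [set: 'I_N]) W h nb a P)%N.

From mathcomp Require Import all_boot all_order all_algebra.
From mathcomp Require Import reals zify ring lra.
Import Order.TTheory GRing.Theory Num.Theory.

(* Give every large player j = h - floor(sqrt a) small players, so that her
   pool wins and has square-root weight sqrt a + j in [h, h + 1), and deal the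
   m >= h^2 remaining small players round-robin into floor(m / h) >= h pools,
   each of h or h + 1 players.  All pools win and have weight in [h, h + 1].
   A player of weight w_i >= 1 moving to a pool of weight w gets at most
   w_i / (w_i + w) <= w_i / (weight of her own pool), and alone she loses, so
   the partition is an equilibrium.  It has at least (n_b sqrt a + n_s) / (h + 1)
   pools, whereas no partition has more than (n_b a + n_s) / h winning pools. *)

Lemma count_modn_iota q t n : t < q ->
  count (fun v => v %% q == t) (iota 0 n) = n %/ q + (t < n %% q).
Proof.
move=> tq; have q_gt0 : 0 < q by apply: leq_ltn_trans tq.
elim: n => [|n IH]; first by rewrite div0n mod0n.
rewrite -addn1 iotaD count_cat IH /= addn0 add0n addn1 (divnS _ q_gt0) modnS.
have nq := ltn_pmod n q_gt0.
case: ifP => [dvd | _]; last by case: (ltngtP t (n %% q)) => //=; lia.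
have last_rem : (n %% q).+1 = q.
  apply/eqP; rewrite eqn_leq nq leqNgt; apply/negP => lt.
  by move: dvd; rewrite /dvdn -addn1 -modnDml addn1 modn_small.
by case: (ltngtP t (n %% q)) => //=; lia.
Qed.

Lemma divn_quotient m h : 0 < h -> h * h <= m -> m %/ (m %/ h) = h.
Proof.
move=> h_gt0 hhm; have h_le_q : h <= m %/ h by rewrite leq_divRL.
rewrite {1}(divn_eq m h) mulnC divnMDl ?(leq_trans h_gt0 h_le_q) //.
by rewrite divn_small ?addn0 // (leq_trans (ltn_pmod m h_gt0) h_le_q).
Qed.

(* [inl k] labels the pool of large player [k], [inr t] the [t]-th pool made
   of small players only. Small players are dealt round-robin: the first
   [nb * j] among the [nb] large players, the others among the [q] small pools. *)
Definition pool_of (nb j q x : nat) : nat + nat :=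
  if x < nb then inl x
  else if x - nb < nb * j then inl ((x - nb) %% nb)
  else inr ((x - nb - nb * j) %% q).

Section PoolCounts.

Variables (nb j q m : nat).

Lemma pool_of_cases x : 0 < q ->
  (exists2 k, k < nb & pool_of nb j q x = inl k) \/
  (exists2 t, t < q & pool_of nb j q x = inr t).
Proof.
move=> q_gt0; rewrite /pool_of; case: ifP => [x_lt | _]; first by left; exists x.
case: ifP => [u_lt | _]; last by right; exists ((x - nb - nb * j) %% q); rewrite ?ltn_pmod.
left; exists ((x - nb) %% nb) => //; rewrite ltn_pmod // lt0n.
by apply: contraTneq u_lt => ->; rewrite mul0n.
Qed.

Lemma count_pool_of_large l :
  count (fun x => pool_of nb j q x == l) (iota 0 nb) =
    count (fun x => inl x == l) (iota 0 nb).
Proof. by apply: eq_in_count => x; rewrite mem_iota /pool_of => /andP[_ ->]. Qed.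

Lemma count_pool_of_small l :
  count (fun x => pool_of nb j q x == l) (iota nb (nb * j + m)) =
    count (fun u => inl (u %% nb) == l) (iota 0 (nb * j)) +
    count (fun v => inr (v %% q) == l) (iota 0 m).
Proof.
rewrite iotaD count_cat -[X in iota X (nb * j)]addn0 -[X in iota X m]addn0.
rewrite !iotaDl !count_map.
congr (_ + _); apply: eq_in_count => u; rewrite mem_iota => /andP[_ u_lt] /=.
  by rewrite /pool_of ltnNge leq_addr /= addKn u_lt.
by rewrite /pool_of -addnA ltnNge leq_addr /= addKn ltnNge leq_addr /= addKn.
Qed.

Lemma pool_counts_large k : k < nb ->
  count (fun x => pool_of nb j q x == inl k) (iota 0 nb) = 1 /\
  count (fun x => pool_of nb j q x == inl k) (iota nb (nb * j + m)) = j.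
Proof.
move=> k_lt; rewrite count_pool_of_large count_pool_of_small; split.
  by rewrite [LHS](count_uniq_mem _ (iota_uniq 0 nb)) mem_iota k_lt.
have nb_gt0 : 0 < nb := leq_ltn_trans (leq0n k) k_lt.
rewrite [count _ (iota 0 m)]count_pred0 addn0.
apply: etrans (count_modn_iota _ _ (nb * j) k_lt) _.
by rewrite mulKn // modnMr ltn0 addn0.
Qed.

Lemma pool_counts_small t : t < q ->
  count (fun x => pool_of nb j q x == inr t) (iota 0 nb) = 0 /\
  count (fun x => pool_of nb j q x == inr t) (iota nb (nb * j + m)) =
    m %/ q + (t < m %% q).
Proof.
move=> t_lt; rewrite count_pool_of_large count_pool_of_small; split.
  exact: count_pred0.
rewrite [count _ (iota 0 (nb * j))]count_pred0 add0n.
exact: count_modn_iota.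
Qed.

End PoolCounts.

Local Open Scope ring_scope.

Lemma sumr_const_count (V : nmodType) (I : Type) (r : seq I) (P : pred I) (x : V) :
  \sum_(i <- r | P i) x = x *+ count P r.
Proof. by rewrite -sum1_count -sumrMnr. Qed.

Lemma sum_stake_pred {V : nmodType} (F : nat -> V) {nb ns : nat} (a : nat)
    (p : pred nat) {C : {set 'I_(nb + ns)}} :
    (forall x : 'I_(nb + ns), (x \in C) = p x) ->
  \sum_(x in C) F (stake nb a x) =
    F a *+ count p (iota 0 nb) + F 1%N *+ count p (iota nb ns).
Proof.
move=> Cp; rewrite (eq_bigl (fun x : 'I_(nb + ns) => p x)) // /stake.
rewrite -(big_mkord p (fun x => F (if x < nb then a else 1)%N)).
rewrite (@big_cat_nat _ _ _ nb) ?leq_addr //=.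
rewrite (@congr_big_nat _ _ _ 0 nb 0 nb p p _ (fun=> F a)) //; last first.
  by move=> x /and3P[_ _ ->].
rewrite (@congr_big_nat _ _ _ nb (nb + ns) nb (nb + ns) p p _ (fun=> F 1%N)) //.
  by rewrite !sumr_const_count /index_iota subn0 addKn.
by move=> x /and3P[_ nbx _]; rewrite ltnNge nbx.
Qed.

Lemma pstake_setT (nb ns a : nat) : pstake nb a [set: 'I_(nb + ns)] = (a * nb + ns)%N.
Proof.
rewrite /pstake (sum_stake_pred id a predT) => [|x]; last by rewrite inE.
by rewrite !count_predT !size_iota natn -mulr_natr natn.
Qed.

Definition sqrt_weight (R : realType) (nb a : nat) {N : nat} (C : {set 'I_N}) : R :=
  \sum_(x in C) Num.sqrt ((stake nb a x)%:R : R).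

Lemma sqrt_weight_setT (R : realType) (nb ns a : nat) :
  sqrt_weight R nb a [set: 'I_(nb + ns)] = Num.sqrt (a%:R : R) *+ nb + ns%:R.
Proof.
rewrite /sqrt_weight (sum_stake_pred (fun n => Num.sqrt (n%:R : R)) a predT).
  by rewrite !count_predT !size_iota sqrtr1.
by move=> x; rewrite inE.
Qed.

Lemma sqrt_weight_ge0 (R : realType) (nb a : nat) {N : nat} (C : {set 'I_N}) :
  0 <= sqrt_weight R nb a C.
Proof. by apply: sumr_ge0 => x _; apply: sqrtr_ge0. Qed.

Lemma is_NE_of_balanced (R : realType) (h nb a N : nat) (P : {set {set 'I_N}}) :
    (0 < a < h)%N -> partition P [set: 'I_N] ->
    (forall C, C \in P -> (h <= pstake nb a C)%N) ->
    (forall B C, B \in P -> C \in P ->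
       sqrt_weight R nb a B <= sqrt_weight R nb a C + 1) ->
  is_NE R h nb a P.
Proof.
move=> /andP[a_gt0 a_lt_h] partP winP balP i.
have i_cover : i \in cover P by rewrite (cover_partition partP) inE.
set w := Num.sqrt ((stake nb a i)%:R : R).
have stake_i : (0 < stake nb a i < h)%N.
  by rewrite /stake; case: ifP => _; rewrite ?a_gt0 ?a_lt_h ?(leq_ltn_trans a_gt0 a_lt_h).
have w_ge1 : 1 <= w by rewrite -sqrtr1 ler_wsqrtr // ler1n; case/andP: stake_i.
set B := pblock P i.
have BP : B \in P by rewrite pblock_mem.
have w_le_B : w <= sqrt_weight R nb a B.
  rewrite /sqrt_weight (bigD1 i) ?mem_pblock //= lerDl.
  by apply: sumr_ge0 => x _; apply: sqrtr_ge0.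
have payB : pay R h nb a i B = w / sqrt_weight R nb a B.
  by rewrite /pay /rho winP // mulr1.
split.
- move=> C CP CB.
  have iC : i \notin C.
    by apply: contra CB => iC; rewrite /B (def_pblock (partition_trivIset partP) CP iC).
  have C_ge0 := sqrt_weight_ge0 R nb a C.
  have B_le := balP B C BP CP.
  rewrite payB /pay big_setU1 //= -/w -/(sqrt_weight R nb a C).
  apply: (le_trans (y := w / (w + sqrt_weight R nb a C))).
    rewrite /rho; case: ifP => _; rewrite ?mulr1 ?mulr0 //.
    by apply: divr_ge0; lra.
  by rewrite ler_wpM2l ?lef_pV2 ?posrE //; lra.
- have lone_loses : rho R h nb a [set i] = 0.
    by rewrite /rho /pstake big_set1 ltn_geF //; case/andP: stake_i.
  by rewrite payB /pay lone_loses mulr0 divr_ge0 //; lra.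
Qed.

Lemma W_all_winning (h nb a N : nat) (P : {set {set 'I_N}}) :
  (forall C, C \in P -> (h <= pstake nb a C)%N) -> W h nb a P = #|P|.
Proof.
by move=> winP; rewrite /W; apply: eq_card => C; rewrite inE andb_idr // => /winP.
Qed.

Lemma W_mul_le (h nb a N : nat) (P : {set {set 'I_N}}) :
  partition P [set: 'I_N] -> (W h nb a P * h <= pstake nb a [set: 'I_N])%N.
Proof.
move=> partP; rewrite /W -sum_nat_const.
rewrite (eq_bigl (fun C => (C \in P) && (h <= pstake nb a C)%N)) => [|C]; last first.
  by rewrite inE.
apply: (@leq_trans (\sum_(C in P) pstake nb a C)).
  by rewrite big_mkcondr leq_sum // => C _; case: ifP.
by rewrite /pstake (set_partition_big _ partP).
Qed.

Lemma OPT_mul_le (h nb a N : nat) : (OPT h nb a N * h <= pstake nb a [set: 'I_N])%N.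
Proof.
case: (posnP h) => [-> | h_gt0]; first by rewrite muln0.
rewrite -leq_divRL //; apply/bigmax_leqP => P partP.
by rewrite leq_divRL // W_mul_le.
Qed.

Lemma sqrt_weight_partition (R : realType) (nb a N : nat) (P : {set {set 'I_N}}) :
  partition P [set: 'I_N] ->
  \sum_(C in P) sqrt_weight R nb a C = sqrt_weight R nb a [set: 'I_N].
Proof. by move=> partP; rewrite /sqrt_weight (set_partition_big _ partP). Qed.

Section BalancedPartition.

Variables (h nb ns j : nat).
Hypotheses (h_gt0 : (0 < h)%N) (ns_ge : (nb * j + h * h <= ns)%N).

Let m := (ns - nb * j)%N.
Let q := (m %/ h)%N.

Let nsE : ns = (nb * j + m)%N.
Proof. by rewrite subnKC // (leq_trans (leq_addr _ _) ns_ge). Qed.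

Let hh_le_m : (h * h <= m)%N.
Proof. by rewrite leq_subRL // (leq_trans (leq_addr _ _) ns_ge). Qed.

Let q_gt0 : (0 < q)%N.
Proof. by rewrite leq_divRL // mul1n (leq_trans (leq_pmull h h_gt0) hh_le_m). Qed.

Definition balanced_partition : {set {set 'I_(nb + ns)}} :=
  preim_partition (fun x : 'I_(nb + ns) => pool_of nb j q x) [set: 'I_(nb + ns)].

Lemma balanced_partitionP : partition balanced_partition [set: 'I_(nb + ns)].
Proof. exact: preim_partitionP. Qed.

Lemma sum_stake_balanced {V : nmodType} (F : nat -> V) (a : nat) C :
  C \in balanced_partition ->
  [\/ \sum_(x in C) F (stake nb a x) = F a + F 1%N *+ j,
      \sum_(x in C) F (stake nb a x) = F 1%N *+ h
    | \sum_(x in C) F (stake nb a x) = F 1%N *+ h.+1].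
Proof.
rewrite /balanced_partition => /imsetP[x _ ->].
rewrite (sum_stake_pred F a (fun y => pool_of nb j q y == pool_of nb j q x)); last first.
  by move=> y; rewrite !inE eq_sym.
rewrite [in iota nb ns]nsE.
case: (pool_of_cases nb j q x q_gt0) => [[k k_lt ->] | [t t_lt ->]].
  by have [-> ->] := pool_counts_large nb j q m k k_lt; rewrite mulr1n; apply: Or31.
have [-> ->] := pool_counts_small nb j q m t t_lt; rewrite mulr0n add0r divn_quotient //.
by case: (t < _)%N; [apply: Or33; rewrite addn1 | apply: Or32; rewrite addn0].
Qed.

Lemma balanced_partition_winning a C : (h <= a + j)%N ->
  C \in balanced_partition -> (h <= pstake nb a C)%N.
Proof.
move=> h_le CP; rewrite /pstake.
by case: (sum_stake_balanced id a C CP) => ->; rewrite natn // leqnSn.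
Qed.

Section SqrtWeight.

Variables (R : realType) (a : nat).
Hypothesis large_pool_weight : h%:R <= Num.sqrt (a%:R : R) + j%:R <= h%:R + 1.

Lemma balanced_partition_sqrt_weight C :
  C \in balanced_partition -> h%:R <= sqrt_weight R nb a C <= h%:R + 1.
Proof.
move=> CP; rewrite /sqrt_weight.
case: (sum_stake_balanced (fun n => Num.sqrt (n%:R : R)) a C CP) => ->; rewrite sqrtr1 //.
  by rewrite lexx lerDl ler01.
by rewrite -natr1 lexx lerDl ler01.
Qed.

Lemma card_balanced_partition :
  Num.sqrt (a%:R : R) * nb%:R + ns%:R <= (h%:R + 1) * #|balanced_partition|%:R.
Proof.
rewrite mulr_natr mulr_natr -sqrt_weight_setT.
rewrite -(sqrt_weight_partition R nb a _ _ balanced_partitionP) -sumr_const.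
by apply: ler_sum => C /balanced_partition_sqrt_weight/andP[].
Qed.

End SqrtWeight.

End BalancedPartition.

Lemma sqrt_nat_le (R : rcfType) (n : nat) : Num.sqrt (n%:R : R) <= n%:R.
Proof.
case: n => [|n]; first by rewrite sqrtr0.
have s_ge1 : 1 <= Num.sqrt (n.+1%:R : R).
  by rewrite -[X in X <= _]sqrtr1 ler_wsqrtr // ler1n.
have := sqr_sqrtr (ler0n R n.+1); nra.
Qed.

Lemma truncn_complement {R : archiRealFieldType} {s : R} {a h j : nat} :
  0 <= s -> s <= a%:R -> (a <= h)%N -> j = (h - Num.truncn s)%N ->
  [/\ (h <= a + j)%N, h%:R <= s + j%:R <= h%:R + 1 & j%:R <= h%:R - s + 1].
Proof.
move=> s_ge0 s_le a_le ->.
have /andP[t_le t_gt] := truncn_itv s_ge0; rewrite -natr1 in t_gt.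
have t_le_a : (Num.truncn s <= a)%N by rewrite -(ler_nat R) (le_trans t_le).
rewrite natrB ?(leq_trans t_le_a) //; split; first by lia.
  by apply/andP; split; lra.
lra.
Qed.

Lemma ler_ratio_scaled (F : realFieldType) (o w t d x : F) :
  0 < x -> 0 < d -> 0 <= t -> o * x <= t -> d <= (x + 1) * w ->
  o / w <= (x + 1) / x * (t / d).
Proof.
move=> x_gt0 d_gt0 t_ge0 ox_le d_le.
have w_gt0 : 0 < w by nra.
rewrite ler_pdivrMr //; apply: (le_trans (y := t / x)); first by rewrite ler_pdivlMr.
have -> : (x + 1) / x * (t / d) * w = t / x * ((x + 1) * w / d) by ring.
have tx_ge0 : 0 <= t / x by rewrite divr_ge0 // ltW.
by rewrite -{1}[t / x]mulr1 ler_wpM2l // ler_pdivlMr // mul1r.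
Qed.

Theorem theoremD2 (R : realType) (h a nb ns : nat) :
  (2 <= a)%N -> (a <= h - 1)%N ->
  (ns%:R : R) >= (h ^ 2)%:R +
     nb%:R * (Num.ceil (h%:R - Num.sqrt (a%:R : R) + 1))%:~R ->
  exists P : {set {set 'I_(nb + ns)}},
    [/\ partition P [set: 'I_(nb + ns)],
        (forall C, C \in P -> (h <= pstake nb a C)%N),
        is_NE R h nb a P &
        (OPT h nb a (nb + ns))%:R / (W h nb a P)%:R <=
          (h.+1)%:R / h%:R *
          ((nb * a + ns)%:R /
           (nb%:R * (Num.sqrt (a%:R : R) - 1) + ns%:R - h%:R - 1))].
Proof.
move=> a_ge2 a_le ns_ge.
have a_lt_h : (a < h)%N by lia.
have h_gt0 : (0 < h)%N by lia.
set s := Num.sqrt (a%:R : R); set j := (h - Num.truncn s)%N.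
have s_ge1 : 1 <= s by rewrite -sqrtr1 ler_wsqrtr // ler1n; lia.
have [h_le_aj s_j j_le] :=
  truncn_complement (sqrtr_ge0 _) (sqrt_nat_le R a) (ltnW a_lt_h) (erefl j).
have ns_ge' : (nb * j + h * h <= ns)%N.
  rewrite -(ler_nat R) natrD !natrM; apply: le_trans ns_ge.
  rewrite natrX expr2 addrC lerD2l ler_wpM2l //.
  exact: le_trans j_le (ceil_ge _).
pose P := balanced_partition h nb ns j.
have winP C := balanced_partition_winning _ _ _ _ h_gt0 ns_ge' a C h_le_aj.
have weightP C := balanced_partition_sqrt_weight _ _ _ _ h_gt0 ns_ge' R a s_j C.
have nb_ge0 := ler0n R nb.
have partP : partition P [set: _] := balanced_partitionP h nb ns j.
exists P; split => //.
  apply: is_NE_of_balanced; rewrite ?(ltnW a_ge2) ?a_lt_h //.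
  by move=> B C /weightP/andP[_ ?] /weightP/andP[? _]; lra.
rewrite W_all_winning // -natr1; apply: ler_ratio_scaled.
- by rewrite ltr0n.
- have : (h * h <= ns)%N := leq_trans (leq_addl _ _) ns_ge'.
  have : (2%:R <= h%:R :> R) by rewrite ler_nat; lia.
  rewrite -(ler_nat R) natrM; nra.
- exact: ler0n.
- by rewrite -natrM ler_nat [(nb * a)%N]mulnC -pstake_setT OPT_mul_le.
- have := card_balanced_partition _ _ _ _ h_gt0 ns_ge' R a s_j; rewrite -/s -/P.
  have := ler0n R h; nra.
Qed.
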